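(* Let $G=(V,E)$ be a graph that is strongly reconstructible in $\mathbb{C}^d$, and suppose that a pair of vertices $u,v\in V$ is globally linked in $G$ in $\mathbb{C}^d$. Then $G'=G+uv$ is strongly reconstructible in $\mathbb{C}^d$. Moreover, if $G$ is fully reconstructible in $\mathbb{C}^d$, then so is $G'$.
   Context: $G+uv$ denotes the graph obtained from $G$ by adding the edge $uv$. For $p:V\to\mathbb{C}^d$, $m_{uv}(p)=\sum_{k=1}^d(p(u)_k-p(v)_k)^2$ (defined for any vertex pair); a framework is generic if its coordinates are algebraically independent over $\mathbb{Q}$; $(G,p),(G,q)$ are equivalent if $m_{e}(p)=m_e(q)$ for all edges $e$; $(G,p),(H,q)$ are length-equivalent under a bijection $\psi:E(G)\to E(H)$ if $m_e(p)=m_{\psi(e)}(q)$ for all $e\in E(G)$. A pair $\{u,v\}$ is globally linked in $G$ in $\mathbb{C}^d$ if for every generic $(G,p)$ in $\mathbb{C}^d$ and every equivalent $(G,q)$ in $\mathbb{C}^d$, $m_{uv}(p)=m_{uv}(q)$. A generic $(G,p)$ in $\mathbb{C}^d$ is strongly reconstructible if for every graph $H$ with the same number of vertices as $G$ and every generic $(H,q)$ in $\mathbb{C}^d$ length-equivalent to $(G,p)$ under some $\psi$, there is an isomorphism $\varphi:V(G)\to V(H)$ with $\psi(xy)=\varphi(x)\varphi(y)$ for all $xy\in E(G)$. Fully reconstructible is defined the same way for $G$ without isolated vertices, but with $H$ ranging over all graphs without isolated vertices (any number of vertices). A graph is strongly (fully) reconstructible in $\mathbb{C}^d$ if all its generic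 realizations in $\mathbb{C}^d$ are. *)

From mathcomp Require Import all_boot all_order all_algebra.
From Stdlib Require Import Reals.
From mathcomp Require Import Rstruct.
From mathcomp.real_closed Require Import complex.
From mathcomp Require Import mpoly.

Set Implicit Arguments. Unset Strict Implicit. Unset Printing Implicit Defensive.
Import GRing.Theory.
Local Open Scope ring_scope.

Definition CC : numClosedFieldType := complex R.

Definition simple_graph (V : finType) (E : {set {set V}}) : Prop :=
  forall e, e \in E -> #|e| = 2%N.

Definition no_isolated (V : finType) (E : {set {set V}}) : Prop :=
  forall x : V, exists2 e, e \in E & x \in e.

Definition sqlen (d : nat) (V : finType) (p : V -> 'I_d -> CC) (x y : V) : CC :=
  \sum_(k < d) (p x k - p y k) ^+ 2.

Definition coords (d : nat) (V : finType) (p : V -> 'I_d -> CC)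
  (i : 'I_#|{: V * 'I_d}|) : CC :=
  let vk := enum_val i in p vk.1 vk.2.

Definition generic (d : nat) (V : finType) (p : V -> 'I_d -> CC) : Prop :=
  forall P : {mpoly rat[#|{: V * 'I_d}|]},
    P != 0 -> (map_mpoly (ratr : rat -> CC) P).@[coords p] != 0.

Definition equivalent (d : nat) (V : finType) (E : {set {set V}})
  (p q : V -> 'I_d -> CC) : Prop :=
  forall x y, [set x; y] \in E -> sqlen p x y = sqlen q x y.

Definition globally_linked (d : nat) (V : finType) (E : {set {set V}}) (u v : V) : Prop :=
  forall p q : V -> 'I_d -> CC, generic p -> equivalent E p q ->
    sqlen p u v = sqlen q u v.

Definition edge_bij (V W : finType) (E : {set {set V}}) (F : {set {set W}})
  (psi : {set V} -> {set W}) : Prop :=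
  {in E &, injective psi} /\ psi @: E = F.

Definition length_equiv (d : nat) (V W : finType) (E : {set {set V}})
  (p : V -> 'I_d -> CC) (q : W -> 'I_d -> CC) (psi : {set V} -> {set W}) : Prop :=
  forall x y x' y', [set x; y] \in E -> psi [set x; y] = [set x'; y'] ->
    sqlen p x y = sqlen q x' y'.

Definition induced_by_iso (V W : finType) (E : {set {set V}})
  (psi : {set V} -> {set W}) : Prop :=
  exists phi : V -> W, bijective phi /\ forall e, e \in E -> psi e = phi @: e.

Definition strongly_reconstructible_fw (d : nat) (V : finType) (E : {set {set V}})
  (p : V -> 'I_d -> CC) : Prop :=
  forall (W : finType) (F : {set {set W}}) (q : W -> 'I_d -> CC)
         (psi : {set V} -> {set W}),
    #|W| = #|V| -> simple_graph F -> generic q ->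
    edge_bij E F psi -> length_equiv E p q psi -> induced_by_iso E psi.

Definition strongly_reconstructible (d : nat) (V : finType) (E : {set {set V}}) : Prop :=
  forall p : V -> 'I_d -> CC, generic p -> strongly_reconstructible_fw E p.

Definition fully_reconstructible_fw (d : nat) (V : finType) (E : {set {set V}})
  (p : V -> 'I_d -> CC) : Prop :=
  forall (W : finType) (F : {set {set W}}) (q : W -> 'I_d -> CC)
         (psi : {set V} -> {set W}),
    simple_graph F -> no_isolated F -> generic q ->
    edge_bij E F psi -> length_equiv E p q psi -> induced_by_iso E psi.

Definition fully_reconstructible (d : nat) (V : finType) (E : {set {set V}}) : Prop :=
  no_isolated E /\
  forall p : V -> 'I_d -> CC, generic p -> fully_reconstructible_fw E p.

From mathcomp Require Import all_boot all_order all_algebra.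
From mathcomp Require Import mpoly.
Set Implicit Arguments. Unset Strict Implicit. Unset Printing Implicit Defensive.
Import GRing.Theory.
Local Open Scope ring_scope.

(* Restricting psi to the edges of G, reconstructibility of G yields a vertex
   map phi inducing psi on E.  Then q o phi is a generic realization of G
   equivalent to p, so global linkedness of uv gives |phi(u) phi(v)|_q = |uv|_p,
   which by length-equivalence is also the length of the edge psi(uv).  In a
   generic realization distinct vertex pairs have distinct squared lengths,
   hence psi(uv) = phi(u) phi(v).  In the fully reconstructible case every
   target vertex lies on an edge psi(e) = phi(e), so phi is onto. *)

Lemma comp_mpolyA (R : comRingType) (n k l : nat) (p : {mpoly R[n]})
  (lq : n.-tuple {mpoly R[k]}) (lr : k.-tuple {mpoly R[l]}) :
  (p \mPo lq) \mPo lr = p \mPo [tuple tnth lq i \mPo lr | i < n].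
Proof.
rewrite [p]mpolyE (raddf_sum (comp_mpoly lq)) !(raddf_sum (comp_mpoly _)).
apply/eq_bigr => m _; rewrite /= !comp_mpolyZ !comp_mpolyX rmorph_prod.
by congr (_ *: _); apply/eq_bigr => i _; rewrite rmorphXn tnth_map tnth_ord_tuple.
Qed.

Lemma map_mpolyXU (R S : nzRingType) (f : {rmorphism R -> S}) (n : nat) (i : 'I_n) :
  map_mpoly f 'X_i = 'X_i.
Proof. exact: map_mpolyX. Qed.

Section Generic.
Variables (d : nat) (W : finType).

Lemma generic_comp_inj (W' : finType) (h : W' -> W) (q : W -> 'I_d -> CC) :
  injective h -> generic q -> generic (fun x => q (h x)).
Proof.
move=> h_inj gen_q P P_neq0.
pose g (i : 'I_#|{: W' * 'I_d}|) := enum_rank (h (enum_val i).1, (enum_val i).2).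
have g_inj : injective g.
  move=> i j /enum_rank_inj [/h_inj eq1 eq2]; apply: enum_val_inj.
  by move: eq1 eq2; case: (enum_val i) => ? ?; case: (enum_val j) => ? ? /= -> ->.
pose t := [tuple ('X_(g i) : {mpoly rat[#|{: W * 'I_d}|]}) | i < #|{: W' * 'I_d}|].
pose t_inv := [tuple (if [pick i | g i == j] is Some i then 'X_i else 0)
  : {mpoly rat[#|{: W' * 'I_d}|]} | j < #|{: W * 'I_d}|].
(* The renaming X_i |-> X_(g i) has a left inverse, so it keeps P nonzero. *)
have t_invK : (P \mPo t) \mPo t_inv = P.
  rewrite comp_mpolyA -[RHS]comp_mpoly_id; congr comp_mpoly.
  apply: eq_from_tnth => i; rewrite !tnth_map !tnth_ord_tuple comp_mpolyXU.
  rewrite -tnth_nth tnth_map tnth_ord_tuple.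
  by case: pickP => [j /eqP /g_inj -> // | /(_ i)]; rewrite eqxx.
have Pt_neq0 : P \mPo t != 0.
  by apply: contraNneq P_neq0 => Pt0; rewrite -t_invK Pt0 comp_mpoly0.
have := gen_q _ Pt_neq0.
rewrite map_mpoly_comp; last exact: fmorph_inj.
rewrite comp_mpoly_meval; congr (_ != 0); apply: meval_eq => i.
rewrite !tnth_map tnth_ord_tuple map_mpolyXU mevalXU /coords /g enum_rankK /=.
by case: (enum_val i).
Qed.

Definition sqlen_mpoly (R : comRingType) (a b : W) : {mpoly R[#|{: W * 'I_d}|]} :=
  \sum_(k < d) ('X_(enum_rank (a, k)) - 'X_(enum_rank (b, k))) ^+ 2.

Lemma map_sqlen_mpoly (R S : comRingType) (f : {rmorphism R -> S}) (a b : W) :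
  map_mpoly f (sqlen_mpoly R a b) = sqlen_mpoly S a b.
Proof.
rewrite rmorph_sum; apply: eq_bigr => k _.
by rewrite rmorphXn rmorphB /= !map_mpolyXU.
Qed.

Lemma meval_sqlen_mpoly (R : comRingType) (f : W * 'I_d -> R) (a b : W) :
  (sqlen_mpoly R a b).@[f \o enum_val] = \sum_(k < d) (f (a, k) - f (b, k)) ^+ 2.
Proof.
rewrite raddf_sum; apply: eq_bigr => k _.
by rewrite /= rmorphXn rmorphB /= !mevalXU /= !enum_rankK.
Qed.

Lemma sqlen_mpoly_neq (a b c e : W) : (0 < d)%N -> a != b -> a \notin [set c; e] ->
  sqlen_mpoly rat a b != sqlen_mpoly rat c e.
Proof.
rewrite !inE negb_or => d_gt0 ab /andP[ac ae].
(* At the indicator of [a] the left side evaluates to [d], the right one to 0. *)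
pose at_a (xk : W * 'I_d) : rat := (xk.1 == a)%:R.
apply: contraTneq d_gt0 => /(congr1 (meval (at_a \o enum_val))).
rewrite !meval_sqlen_mpoly /at_a /= eqxx ![_ == a]eq_sym (negbTE ab) (negbTE ac).
rewrite (negbTE ae) subr0 subrr expr1n expr0n /= big1_eq sumr_const card_ord.
by move/eqP; rewrite Num.Theory.pnatr_eq0 => /eqP ->.
Qed.

Lemma sqlen_sym (q : W -> 'I_d -> CC) (a b : W) : sqlen q a b = sqlen q b a.
Proof. by apply: eq_bigr => k _; rewrite -opprB sqrrN. Qed.

Variable q : W -> 'I_d -> CC.
Hypothesis gen_q : generic q.

Lemma generic_sqlen_neq (a b c e : W) : (0 < d)%N -> a != b -> a \notin [set c; e] ->
  sqlen q a b != sqlen q c e.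
Proof.
move=> d_gt0 ab ace.
rewrite -subr_eq0; have := gen_q (_ : sqlen_mpoly rat a b - sqlen_mpoly rat c e != 0).
rewrite rmorphB /= !map_sqlen_mpoly mevalB.
rewrite !(meval_sqlen_mpoly (fun xk => q xk.1 xk.2)); apply.
by rewrite subr_eq0 sqlen_mpoly_neq.
Qed.

Lemma generic_sqlen_inj (a b c e : W) : (0 < d)%N -> a != b -> c != e ->
  sqlen q a b = sqlen q c e -> [set a; b] = [set c; e].
Proof.
move=> d_gt0 ab ce ab_ce.
have a_ce : a \in [set c; e].
  by apply: contraT => /(generic_sqlen_neq d_gt0 ab); rewrite ab_ce eqxx.
have b_ce : b \in [set c; e].
  have ba : b != a by rewrite eq_sym.
  by apply: contraT => /(generic_sqlen_neq d_gt0 ba); rewrite sqlen_sym ab_ce eqxx.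
apply/eqP; rewrite eqEcard !cards2 ab ce andbT.
by apply/subsetP => x /set2P[] ->.
Qed.

End Generic.

Section Restriction.
Variables (d : nat) (V : finType) (E : {set {set V}}) (p : V -> 'I_d -> CC).

Lemma length_equiv_sub (W : finType) (E1 : {set {set V}}) (q : W -> 'I_d -> CC)
    (psi : {set V} -> {set W}) :
  E1 \subset E -> length_equiv E p q psi -> length_equiv E1 p q psi.
Proof. by move=> /subsetP E1E le x y x' y' /E1E; apply: le. Qed.

Lemma edge_bij_card2 (W : finType) (F : {set {set W}}) (psi : {set V} -> {set W}) :
  edge_bij E F psi -> simple_graph F -> {in E, forall e, #|psi e| = 2}.
Proof. by move=> [_ <-] simF e eE; apply/simF/imset_f. Qed.

Lemma strongly_reconstructible_fw_image (W : finType) (q : W -> 'I_d -> CC)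
    (psi : {set V} -> {set W}) :
  strongly_reconstructible_fw E p -> #|W| = #|V| -> generic q ->
  {in E &, injective psi} -> {in E, forall e, #|psi e| = 2} ->
  length_equiv E p q psi ->
  exists2 phi : V -> W, bijective phi & {in E, forall e, psi e = phi @: e}.
Proof.
move=> SR cardW gen_q psi_inj psi2 le.
have simF : simple_graph (psi @: E) by move=> _ /imsetP[e eE ->]; apply: psi2.
by have [phi [??]] := SR W _ q psi cardW simF gen_q (conj psi_inj erefl) le; exists phi.
Qed.

Lemma fully_reconstructible_fw_image (W : finType) (q : W -> 'I_d -> CC)
    (psi : {set V} -> {set W}) :
  fully_reconstructible_fw E p -> generic q ->
  {in E &, injective psi} -> {in E, forall e, #|psi e| = 2} ->
  length_equiv E p q psi ->
  exists2 phi : V -> W, injective phi & {in E, forall e, psi e = phi @: e}.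
Proof.
move=> FR gen_q psi_inj psi2 le.
(* Full reconstructibility needs a target without isolated vertices: keep
   only the vertices covered by psi(E). *)
pose W' := {w : W | [exists e in E, w \in psi e]}.
pose psi' (e : {set V}) := [set w : W' | val w \in psi e].
have psiE e : e \in E -> psi e = val @: psi' e.
  move=> eE; apply/setP => w; apply/idP/imsetP => [we | [w' + ->]]; last by rewrite inE.
  have w_cov : [exists e in E, w \in psi e] by apply/existsP; exists e; rewrite eE.
  by exists (exist _ w w_cov); rewrite ?inE.
have simF : simple_graph (psi' @: E).
  by move=> _ /imsetP[e eE ->]; rewrite -(card_imset _ val_inj) -psiE ?psi2.
have nisoF : no_isolated (psi' @: E).
  move=> w; have /existsP[e /andP[eE we]] := valP w.
  by exists (psi' e); rewrite ?imset_f ?inE.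
have psi'_inj : {in E &, injective psi'}.
  by move=> e f eE fE psi'ef; apply: psi_inj; rewrite ?psiE ?psi'ef.
have le' : length_equiv E p (fun w => q (val w)) psi'.
  move=> x y x' y' xyE psi'xy; apply: (le _ _ _ _ xyE).
  by rewrite psiE // psi'xy imsetU1 imset_set1.
have [phi [/bij_inj phi_inj phiE]] := FR W' _ _ psi' simF nisoF
  (generic_comp_inj val_inj gen_q) (conj psi'_inj erefl) le'.
exists (fun x => val (phi x)) => [x y /val_inj /phi_inj // | e eE].
by rewrite psiE // phiE // -imset_comp.
Qed.

End Restriction.

Section AddedEdge.
Variables (d : nat) (V : finType) (E : {set {set V}}) (u v : V).
Hypotheses (d_gt0 : (0 < d)%N) (uv : u != v) (linked_uv : globally_linked d E u v).
Local Notation E' := (E :|: [set [set u; v]]).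

Let uv_in_E' : [set u; v] \in E'.
Proof. by rewrite !inE eqxx orbT. Qed.

Lemma induced_on_added_edge (W : finType) (p : V -> 'I_d -> CC) (q : W -> 'I_d -> CC)
    (psi : {set V} -> {set W}) (phi : V -> W) :
  generic p -> generic q -> length_equiv E' p q psi -> #|psi [set u; v]| = 2 ->
  injective phi -> {in E, forall e, psi e = phi @: e} ->
  {in E', forall e, psi e = phi @: e}.
Proof.
move=> gen_p gen_q le psi_uv2 phi_inj phiE e.
rewrite inE => /orP[/phiE // | /set1P ->].
have /cards2P[x [y [xy psi_uv]]] : #|psi [set u; v]| == 2 by rewrite psi_uv2.
have len_xy : sqlen p u v = sqlen q x y by apply: le psi_uv; rewrite !inE eqxx orbT.
have len_phi : sqlen p u v = sqlen (fun w => q (phi w)) u v.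
  apply: linked_uv => // a b abE; apply: le; first by rewrite inE abE.
  by rewrite phiE // imsetU1 imset_set1.
rewrite psi_uv imsetU1 imset_set1.
apply: (generic_sqlen_inj gen_q d_gt0 xy); first by rewrite (inj_eq phi_inj).
by rewrite -len_xy len_phi.
Qed.

Lemma strongly_reconstructible_add_edge :
  strongly_reconstructible d E -> strongly_reconstructible d E'.
Proof.
move=> SR p gen_p W F q psi cardW simF gen_q [psi_inj psiE'] le.
have psi2 := edge_bij_card2 (conj psi_inj psiE') simF.
have [|||phi phi_bij phiE] :=
  strongly_reconstructible_fw_image (psi := psi) (SR p gen_p) cardW gen_q.
- by move=> x y xE yE; apply: psi_inj; rewrite inE ?xE ?yE.
- by move=> e eE; apply: psi2; rewrite inE eE.
- exact: length_equiv_sub (subsetUl _ _) le.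
exists phi; split=> //.
exact: induced_on_added_edge gen_p gen_q le (psi2 _ uv_in_E') (bij_inj phi_bij) phiE.
Qed.

Lemma fully_reconstructible_add_edge :
  fully_reconstructible d E -> fully_reconstructible d E'.
Proof.
move=> [nisoE FR]; split.
  by move=> x; have [e eE xe] := nisoE x; exists e; rewrite ?inE ?eE.
move=> p gen_p W F q psi simF nisoF gen_q [psi_inj psiE'] le.
have psi2 := edge_bij_card2 (conj psi_inj psiE') simF.
have [|||phi phi_inj phiE] :=
  fully_reconstructible_fw_image (psi := psi) (FR p gen_p) gen_q.
- by move=> x y xE yE; apply: psi_inj; rewrite inE ?xE ?yE.
- by move=> e eE; apply: psi2; rewrite inE eE.
- exact: length_equiv_sub (subsetUl _ _) le.
have phiE' := induced_on_added_edge gen_p gen_q le (psi2 _ uv_in_E') phi_inj phiE.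
exists phi; split=> //; apply: (inj_card_bij phi_inj).
rewrite -(card_codom phi_inj); apply/subset_leq_card/subsetP => w _.
have [f] := nisoF w; rewrite -psiE' => /imsetP[e eE ->].
by rewrite phiE' // => /imsetP[x _ ->]; apply: codom_f.
Qed.

End AddedEdge.

Theorem lemma4p10 (d : nat) (V : finType) (E : {set {set V}}) (u v : V) :
  (0 < d)%N -> simple_graph E -> u != v ->
  strongly_reconstructible d E -> globally_linked d E u v ->
  strongly_reconstructible d (E :|: [set [set u; v]]) /\
  (fully_reconstructible d E -> fully_reconstructible d (E :|: [set [set u; v]])).
Proof.
move=> d_gt0 _ uv SR linked_uv; split.
  exact: strongly_reconstructible_add_edge.
exact: fully_reconstructible_add_edge.
Qed.
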